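(* Let $m,n\geq 1$ and let $c_0:V(K_{m,n})\to\mathbb{Z}$ be any initial chip configuration on the complete bipartite graph $K_{m,n}$. Then the sequence of configurations $(c_t)_{t\ge0}$ produced by the diffusion process is eventually periodic, i.e. there exist $t\geq 0$ and $p\geq 1$ with $c_{t+p}=c_t$.
   Context: Diffusion process: for a finite simple graph $G$ and a chip configuration $c_t:V(G)\to\mathbb{Z}$ (negative values allowed), the next configuration is defined simultaneously for every vertex $u$ by $c_{t+1}(u)=c_t(u)-|\{w\in N(u): c_t(u)>c_t(w)\}|+|\{w\in N(u): c_t(u)<c_t(w)\}|$. *)

From mathcomp Require Import all_boot all_order all_algebra.
Set Implicit Arguments. Unset Strict Implicit. Unset Printing Implicit Defensive.
Import Order.TTheory GRing.Theory Num.Theory.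
Local Open Scope ring_scope.

Definition simple_graph (T : finType) (e : rel T) : Prop :=
  symmetric e /\ irreflexive e.

Definition diffuse_step (T : finType) (e : rel T) (c : T -> int) : T -> int :=
  fun u => c u - (#|[set w | e u w & c w < c u]|)%:Z
               + (#|[set w | e u w & c u < c w]|)%:Z.

Definition diffuse (T : finType) (e : rel T) (c0 : T -> int) (t : nat) : T -> int :=
  iter t (diffuse_step e) c0.

Definition Kmn_adj (m n : nat) : rel ('I_m + 'I_n)%type :=
  fun x y => match x, y with
             | inl _, inr _ | inr _, inl _ => true
             | _, _ => false
             end.

Lemma Kmn_simple (m n : nat) : simple_graph (@Kmn_adj m n).
Proof. by split; [case=> x; case=> y | case=> x]. Qed.

From mathcomp Require Import all_boot all_order all_algebra.
From mathcomp Require Import zify.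
Set Implicit Arguments. Unset Strict Implicit. Unset Printing Implicit Defensive.
Import Order.TTheory GRing.Theory Num.Theory.
Local Open Scope ring_scope.

(* Write one diffusion step as c' = c + f, where f v is the net flow of chips
   into v, an antisymmetric sum of signs over the edges at v.  The total number
   of chips is conserved, and the energy \sum c^2 changes by
   -V(c) + \sum f^2, where V(c) = \sum_(u ~ w) |c u - c w| and \sum f^2 <= N^3
   for N vertices.  On a connected graph, |c v - c w| <= N V(c) for all v, w,
   so a small V(c) confines every value near the conserved average.  Hence the
   energy, and with it every value, stays bounded along the orbit: only
   finitely many configurations occur, and two of them coincide.
   K_(m,n) is connected as soon as m, n >= 1. *)

Lemma sgrB (R : realDomainType) (x y : R) :
  Num.sg (y - x) = (x < y)%R%:R - (y < x)%R%:R.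
Proof.
case: ltrgtP => [lt_xy | lt_yx | ->]; last by rewrite !subrr sgr0.
- by rewrite gtr0_sg ?subr_gt0 // subr0.
- by rewrite ltr0_sg ?subr_lt0 // sub0r.
Qed.

Lemma ler_sum_term (I : finType) (F : I -> int) i :
  (forall j, 0 <= F j) -> F i <= \sum_j F j.
Proof. by move=> F_ge0; rewrite (bigD1 i) //= lerDl sumr_ge0. Qed.

Lemma sumr_const_int (I : finType) (k : int) : \sum_(i : I) k = #|I|%:Z * k.
Proof. by rewrite sumr_const -mulr_natl natz. Qed.

Lemma nat_fun_repeat (F : finType) (g : nat -> F) :
  exists i j, (i < j)%N /\ g i = g j.
Proof.
have /injectivePn[i [j neq_ij eq_g]] :
    ~~ injectiveb (fun i : 'I_#|F|.+1 => g i).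
  by apply/injectiveP => /leq_card; rewrite card_ord ltnn.
have [lt_ij | lt_ji | /val_inj eq_ij] := ltngtP i j.
- by exists i, j.
- by exists j, i.
- by rewrite eq_ij eqxx in neq_ij.
Qed.

Lemma bounded_fun_repeat (T : finType) (u : nat -> T -> int) (M : nat) :
  (forall t v, `|u t v| <= M%:Z) -> exists i j, (i < j)%N /\ u i =1 u j.
Proof.
move=> le_M.
pose code t : {ffun T -> 'I_(2 * M).+1} :=
  [ffun v => inord (absz (u t v + M%:Z))].
have codeK t v : (code t v)%:Z - M%:Z = u t v.
  by rewrite ffunE inordK; have := le_M t v; lia.
have [i [j [lt_ij eq_code]]] := nat_fun_repeat code.
by exists i, j; split => // v; rewrite -!codeK eq_code.
Qed.

Section Diffusion.
Variables (T : finType) (e : rel T).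
Hypothesis e_sym : symmetric e.
Implicit Types (c : T -> int) (u v w : T).

Definition flow c v w : int := if e v w then Num.sg (c w - c v) else 0.

Definition net_flow c v : int := \sum_w flow c v w.

Definition energy c : int := \sum_v c v ^+ 2.

Definition variation c : int :=
  \sum_v \sum_w (if e v w then `|c v - c w| else 0).

Lemma diffuse_stepE c v : diffuse_step e c v = c v + net_flow c v.
Proof.
have card_setE (P : pred T) : #|[set w | P w]|%:Z = \sum_w (P w)%:R.
  rewrite -natz -sum1_card big_mkcond natr_sum /=.
  by apply: eq_bigr => w _; rewrite inE; case: (P w).
rewrite /diffuse_step !card_setE -addrA; congr (_ + _); rewrite addrC -sumrB.
by apply: eq_bigr => w _; rewrite /flow sgrB; case: (e v w); rewrite ?subr0.
Qed.

Lemma flowN c v w : flow c w v = - flow c v w.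
Proof.
by rewrite /flow e_sym; case: (e v w); rewrite ?oppr0 // -sgrN opprB.
Qed.

Lemma sum_antisym (F : T -> T -> int) :
  (forall v w, F w v = - F v w) -> \sum_v \sum_w F v w = 0.
Proof.
move=> F_anti; suff: (\sum_v \sum_w F v w) *+ 2 = 0 by lia.
rewrite mulr2n {2}exchange_big -big_split big1 // => v _.
by rewrite -big_split big1 // => w _ /=; rewrite F_anti addNr.
Qed.

Lemma sum_net_flow c : \sum_v net_flow c v = 0.
Proof. exact: sum_antisym (flowN c). Qed.

Lemma sum_diffuse_step c : \sum_v diffuse_step e c v = \sum_v c v.
Proof.
rewrite (eq_bigr _ (fun v _ => diffuse_stepE c v)) big_split /=.
by rewrite sum_net_flow addr0.
Qed.

Lemma sum_diffuse c0 t : \sum_v diffuse e c0 t v = \sum_v c0 v.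
Proof. by elim: t => //= t IHt; rewrite sum_diffuse_step. Qed.

Lemma variation_ge0 c : 0 <= variation c.
Proof. by apply: sumr_ge0 => v _; apply: sumr_ge0 => w _; case: (e v w). Qed.

Lemma sum_mul_net_flow c : (\sum_v c v * net_flow c v) *+ 2 = - variation c.
Proof.
(* Antisymmetry of the flow turns [2 * c v] into [c v - c w] under the sum. *)
have sym_part : \sum_v \sum_w (c v + c w) * flow c v w = 0.
  by apply: sum_antisym => v w; rewrite flowN addrC mulrN.
rewrite -[LHS]subr0 -[X in _ - X]sym_part mulr2n -big_split -sumrB.
rewrite /variation -sumrN.
apply: eq_bigr => v _ /=; rewrite /net_flow mulr_sumr -big_split -sumrB -sumrN.
apply: eq_bigr => w _ /=; rewrite /flow.
case: (e v w); last by rewrite !mulr0 subr0 oppr0.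
by rewrite distrC normrEsg; lia.
Qed.

Lemma energy_diffuse_step c :
  energy (diffuse_step e c) = energy c - variation c + \sum_v net_flow c v ^+ 2.
Proof.
rewrite -sum_mul_net_flow /energy.
under eq_bigr do rewrite diffuse_stepE sqrrD.
by rewrite !big_split /= mulr2n addrA.
Qed.

Lemma norm_net_flow_le c v : `|net_flow c v| <= #|T|%:Z.
Proof.
rewrite -[#|T|%:Z]mulr1 -sumr_const_int; apply: le_trans (ler_norm_sum _ _ _) _.
apply: ler_sum => w _; rewrite /flow; case: (e v w); rewrite ?normr0 //.
by rewrite normr_sg; case: eqP.
Qed.

Lemma sum_net_flow_sq_le c : \sum_v net_flow c v ^+ 2 <= (#|T| ^ 3)%:Z.
Proof.
have -> : (#|T| ^ 3)%:Z = \sum_(v : T) (#|T| ^ 2)%:Z.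
  by rewrite sumr_const_int; lia.
by apply: ler_sum => v _; have := norm_net_flow_le c v; nia.
Qed.

Lemma norm_sub_le_variation c u v : e u v -> `|c u - c v| <= variation c.
Proof.
move=> e_uv; pose F x y : int := if e x y then `|c x - c y| else 0.
have F_ge0 x y : 0 <= F x y by rewrite /F; case: (e x y).
have le_F : `|c u - c v| <= F u v by rewrite /F e_uv.
apply: (le_trans le_F); apply: (le_trans (ler_sum_term v (F_ge0 u))).
exact: ler_sum_term u (fun x => sumr_ge0 _ (fun y _ => F_ge0 x y)).
Qed.

Lemma path_norm_sub_le c x p :
  path e x p -> `|c x - c (last x p)| <= (size p)%:Z * variation c.
Proof.
elim: p x => [|y p IHp] x /=; first by rewrite subrr normr0 mul0r.
case/andP=> e_xy /IHp le_yp; have le_xy := norm_sub_le_variation c e_xy.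
by apply: le_trans (ler_distD (c y) _ _) _; lia.
Qed.

Lemma connect_norm_sub_le c u v :
  connect e u v -> `|c u - c v| <= #|T|%:Z * variation c.
Proof.
case/connectP=> p /shortenP[q e_q /andP[_ uniq_q] _] ->.
have size_q : (size q <= #|T|)%N.
  by rewrite -(card_uniqP uniq_q) max_card.
apply: le_trans (path_norm_sub_le c e_q) _.
by rewrite ler_wpM2r ?variation_ge0 ?lez_nat.
Qed.

Hypothesis e_connected : forall u v, connect e u v.

Lemma norm_le_variation c v :
  `|c v| <= `|\sum_u c u| + (#|T| ^ 2)%:Z * variation c.
Proof.
have card_gt0 : (0 < #|T|)%N by apply/card_gt0P; exists v.
have sum_split : #|T|%:Z * c v = \sum_u c u + \sum_u (c v - c u).
  by rewrite sumrB addrC subrK sumr_const_int.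
have le_diff : `|\sum_u (c v - c u)| <= (#|T| ^ 2)%:Z * variation c.
  apply: le_trans (ler_norm_sum _ _ _) _.
  have -> : (#|T| ^ 2)%:Z * variation c = \sum_(u : T) #|T|%:Z * variation c.
    by rewrite sumr_const_int; lia.
  by apply: ler_sum => u _; apply: connect_norm_sub_le.
have := ler_normD (\sum_u c u) (\sum_u (c v - c u)).
by rewrite -sum_split normrM; nia.
Qed.

Lemma energy_le c X : (forall v, `|c v| <= X) -> energy c <= #|T|%:Z * X ^+ 2.
Proof.
move=> le_X; rewrite -sumr_const_int; apply: ler_sum => v _.
by have := le_X v; nia.
Qed.

(* [N ^ 3] bounds [\sum_v net_flow c v ^+ 2], so the energy can only grow when
   [variation c <= N ^ 3], and then |c v| <= |s| + N ^ 2 * N ^ 3. *)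
Definition energy_cap (s : int) : int :=
  #|T|%:Z * (`|s| + (#|T| ^ 5)%:Z) ^+ 2 + (#|T| ^ 3)%:Z.

Lemma energy_diffuse_step_le c :
  energy (diffuse_step e c) <= Num.max (energy c) (energy_cap (\sum_v c v)).
Proof.
rewrite energy_diffuse_step le_max; have flow_le := sum_net_flow_sq_le c.
have [large | small] := ltP (#|T| ^ 3)%:Z (variation c).
  by apply/orP; left; lia.
apply/orP; right.
have norm_le v : `|c v| <= `|\sum_u c u| + (#|T| ^ 5)%:Z.
  apply: le_trans (norm_le_variation c v) _; rewrite lerD2l.
  have -> : (#|T| ^ 5)%:Z = (#|T| ^ 2)%:Z * (#|T| ^ 3)%:Z.
    by rewrite -PoszM -expnD.
  by rewrite ler_wpM2l.
have := energy_le norm_le; have := variation_ge0 c; rewrite /energy_cap; lia.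
Qed.

Lemma energy_diffuse_le c0 t :
  energy (diffuse e c0 t) <= Num.max (energy c0) (energy_cap (\sum_v c0 v)).
Proof.
elim: t => [|t IHt]; first by rewrite le_max lexx.
apply: le_trans (energy_diffuse_step_le _) _.
by rewrite sum_diffuse ge_max IHt le_max lexx orbT.
Qed.

Lemma norm_diffuse_le c0 t v :
  `|diffuse e c0 t v| <= Num.max (energy c0) (energy_cap (\sum_v c0 v)).
Proof.
apply: le_trans (energy_diffuse_le c0 t).
have sq_le : diffuse e c0 t v ^+ 2 <= energy (diffuse e c0 t).
  by apply: ler_sum_term v (fun u => sqr_ge0 _).
by apply: le_trans sq_le; nia.
Qed.

Theorem diffuse_eventually_periodic c0 :
  exists t p, (0 < p)%N /\ diffuse e c0 (t + p) =1 diffuse e c0 t.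
Proof.
pose B := Num.max (energy c0) (energy_cap (\sum_v c0 v)).
have le_B t v : `|diffuse e c0 t v| <= (absz B)%:Z.
  by rewrite abszE; apply: le_trans (norm_diffuse_le c0 t v) (ler_norm B).
have [i [j [lt_ij eq_ij]]] := bounded_fun_repeat le_B.
exists i, (j - i)%N; rewrite subn_gt0 subnKC; last exact: ltnW.
by split=> [|v]; [exact: lt_ij | exact: esym (eq_ij v)].
Qed.

End Diffusion.

Lemma Kmn_connected m n :
  (0 < m)%N -> (0 < n)%N -> forall u v, connect (@Kmn_adj m n) u v.
Proof.
move=> m_gt0 n_gt0.
have left_right a b : connect (@Kmn_adj m n) (inl a) (inr b) by apply: connect1.
have right_left b a : connect (@Kmn_adj m n) (inr b) (inl a) by apply: connect1.
case=> [a|b] [a'|b'].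
- exact: connect_trans (left_right a (Ordinal n_gt0)) (right_left _ a').
- exact: left_right.
- exact: right_left.
- exact: connect_trans (right_left b (Ordinal m_gt0)) (left_right _ b').
Qed.

Theorem theorem13 (m n : nat) (hm : (1 <= m)%N) (hn : (1 <= n)%N)
    (c0 : ('I_m + 'I_n)%type -> int) :
  exists t p : nat, (1 <= p)%N /\
    diffuse (@Kmn_adj m n) c0 (t + p) =1 diffuse (@Kmn_adj m n) c0 t.
Proof.
exact: diffuse_eventually_periodic (Kmn_simple m n).1 (Kmn_connected hm hn) c0.
Qed.
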